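(* Let $n\ge3$ and $x\in\mathbb{C}$, and let $A$ be the $n\times n$ tridiagonal matrix with all diagonal entries $x$, all subdiagonal entries $\mathbf{i}$, superdiagonal entries $A_{1,2}=A_{n-1,n}=2\mathbf{i}$ and $A_{k,k+1}=\mathbf{i}$ for $2\le k\le n-2$, where $\mathbf{i}=\sqrt{-1}$. Then $$\det(A)=(x^2+4)F_{n-1}(x).$$
   Context: The Fibonacci polynomials are defined by $F_0(x)=0$, $F_1(x)=1$, $F_n(x)=xF_{n-1}(x)+F_{n-2}(x)$ for $n\ge2$. *)

From mathcomp Require Import all_boot all_order all_algebra all_field.
Set Implicit Arguments. Unset Strict Implicit. Unset Printing Implicit Defensive.
Import Order.TTheory GRing.Theory Num.Theory.
Local Open Scope ring_scope.

(* Fibonacci polynomials: F_0 = 0, F_1 = 1, F_n = X F_{n-1} + F_{n-2}. *)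
Fixpoint fibpoly_aux (R : comNzRingType) (n : nat) : {poly R} * {poly R} :=
  match n with
  | 0%N => (0, 1)
  | m.+1 => let p := fibpoly_aux R m in (p.2, 'X * p.2 + p.1)
  end.
Definition fibpoly (R : comNzRingType) (n : nat) : {poly R} := (fibpoly_aux R n).1.

Definition tridA (n : nat) (x : algC) : 'M[algC]_n :=
  \matrix_(i < n, j < n)
    if (i : nat) == j then x
    else if (i : nat) == j.+1 then 'i
    else if (j : nat) == i.+1 then
      (if ((i : nat) == 0%N) || ((i : nat) == (n - 2)%N) then 2 * 'i else 'i)
    else 0.

From mathcomp Require Import all_boot all_order all_algebra all_field.
From mathcomp Require Import ring zify.
Set Implicit Arguments.
Unset Strict Implicit.
Unset Printing Implicit Defensive.

Import GRing.Theory Num.Theory.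
Local Open Scope ring_scope.

(** Expanding along the last row, the leading principal minors [D_k] of a
    tridiagonal matrix satisfy [D_(k+2) = d D_(k+1) - l u D_k]; here [l u] is
    [i * i = -1] in the bulk, so they follow the Fibonacci recurrence.  The
    top corner entry [2i] makes [D_1 = x], [D_2 = x^2 + 2]: these are the
    Lucas polynomials [L_k].  The bottom corner doubles the last step, so
    [det A = x L_(n-1) + 2 L_(n-2) = (x^2 + 4) F_(n-1)]. *)

Section Continuant.
Variables (R : comNzRingType) (d l u : nat -> R).

Definition tridiag (n : nat) : 'M[R]_n :=
  \matrix_(i < n, j < n)
    if (i : nat) == j then d i
    else if (i : nat) == j.+1 then l j
    else if (j : nat) == i.+1 then u i else 0.

Lemma tridiag_minor_max n :
  row' ord_max (col' ord_max (tridiag n.+1)) = tridiag n.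
Proof. by apply/matrixP => i j; rewrite !mxE !lift_max. Qed.

Lemma tridiag_minor_maxS n :
  row' ord_max (col' ord_max
    (row' ord_max (col' (widen_ord (leqnSn _) ord_max) (tridiag n.+2))))
  = tridiag n.
Proof.
have bump_small h k : (k < h)%N -> bump h k = k.
  by move=> lt_kh; rewrite /bump leqNgt lt_kh.
apply/matrixP => i j; have lt_in := ltn_ord i; have lt_jn := ltn_ord j.
by rewrite !mxE /= !bump_small // ltnW.
Qed.

Lemma det_tridiagSS n :
  \det (tridiag n.+2) =
  d n.+1 * \det (tridiag n.+1) - l n * u n * \det (tridiag n).
Proof.
rewrite (expand_det_row _ ord_max) !big_ord_recr /= big1 ?add0r; last first.
  move=> j _; rewrite !mxE /=; have lt_jn := ltn_ord j.
  by do 3 (rewrite ifF; last by apply/negbTE; lia); rewrite mul0r.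
rewrite addrC !mxE /= eqxx ifF; last by apply/negbTE; lia.
rewrite /cofactor tridiag_minor_max addnn -signr_odd odd_double mul1r.
set M := row' _ _.
rewrite (expand_det_col M ord_max) big_ord_recr /= big1 ?add0r; last first.
  move=> i _; have lt_in := ltn_ord i.
  rewrite /M !mxE /= /bump leqnn (leq_gtF (ltnW lt_in)).
  by do 3 (rewrite ifF; last by apply/negbTE; lia); rewrite mul0r.
rewrite /cofactor tridiag_minor_maxS !mxE /= /bump leqnn ltnn add1n.
rewrite ifF; last by apply/negbTE; lia.
rewrite ifF; last by apply/negbTE; lia.
rewrite eqxx addSn exprS !addnn -signr_odd odd_double add0n.
ring.
Qed.

End Continuant.

Section FibonacciLucas.
Variable R : comNzRingType.

Lemma fibpoly0 : fibpoly R 0 = 0. Proof. by []. Qed.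
Lemma fibpoly1 : fibpoly R 1 = 1. Proof. by []. Qed.
Lemma fibpolySS n : fibpoly R n.+2 = 'X * fibpoly R n.+1 + fibpoly R n.
Proof. by []. Qed.

(* The Lucas polynomial [L_n = F_(n+1) + F_(n-1)], written without [F_(-1)]. *)
Definition lucaspoly n : {poly R} := 2 * fibpoly R n.+1 - 'X * fibpoly R n.

Lemma lucaspoly1 : lucaspoly 1 = 'X.
Proof. by rewrite /lucaspoly fibpolySS fibpoly1 fibpoly0; ring. Qed.

Lemma lucaspoly2 : lucaspoly 2 = 'X ^+ 2 + 2.
Proof. by rewrite /lucaspoly !fibpolySS fibpoly1 fibpoly0; ring. Qed.

Lemma lucaspolySS n : lucaspoly n.+2 = 'X * lucaspoly n.+1 + lucaspoly n.
Proof. by rewrite /lucaspoly !fibpolySS; ring. Qed.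

Lemma horner_lucaspolySS n x :
  (lucaspoly n.+2).[x] = x * (lucaspoly n.+1).[x] + (lucaspoly n).[x].
Proof. by rewrite lucaspolySS hornerD hornerM hornerX. Qed.

Lemma mul_X2_add4_fibpoly n :
  ('X ^+ 2 + 4) * fibpoly R n.+1 = 'X * lucaspoly n.+1 + 2 * lucaspoly n.
Proof. by rewrite /lucaspoly !fibpolySS; ring. Qed.

Lemma horner_mul_X2_add4_fibpoly n x :
  (x ^+ 2 + 4) * (fibpoly R n.+1).[x] =
  x * (lucaspoly n.+1).[x] + 2 * (lucaspoly n).[x].
Proof.
have : (('X ^+ 2 + 4) * fibpoly R n.+1).[x] =
       ('X * lucaspoly n.+1 + 2 * lucaspoly n).[x].
  by rewrite mul_X2_add4_fibpoly.
by rewrite (hornerM (_ + 4)) hornerD hornerXn (hornerD (_ * _)) !hornerM hornerX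
  !hornerMn hornerC.
Qed.

End FibonacciLucas.

Section TridA.
Variables (n : nat) (x : algC).

Definition tridA_super (i : nat) : algC :=
  if (i == 0%N) || (i == (n - 2)%N) then 2 * 'i else 'i.

Let T := tridiag (fun=> x) (fun=> 'i) tridA_super.

Lemma tridA_tridiag : tridA n x = T n.
Proof. by apply/matrixP => i j; rewrite !mxE. Qed.

Lemma det_tridA_leading_lucaspoly k : (k.+2 < n)%N ->
  \det (T k.+1) = (lucaspoly algC k.+1).[x] /\
  \det (T k.+2) = (lucaspoly algC k.+2).[x].
Proof.
elim: k => [|k IHk] lt_kn.
  rewrite det_tridiagSS det_mx11 det_mx00 mxE lucaspoly1 lucaspoly2.
  rewrite /tridA_super eqxx orTb !(hornerX, hornerD, hornerXn, hornerMn, hornerC).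
  by split=> //; have sqi := @sqrCi algC; ring: sqi.
have [Tk1 Tk2] := IHk (ltnW lt_kn); split=> //.
rewrite det_tridiagSS Tk1 Tk2 [RHS]horner_lucaspolySS.
have -> : tridA_super k.+1 = 'i by rewrite /tridA_super ifF //; apply/negbTE; lia.
by have sqi := @sqrCi algC; ring: sqi.
Qed.

End TridA.

Theorem theorem12 (n : nat) (x : algC) :
  (3 <= n)%N ->
  \det (tridA n x) = (x ^+ 2 + 4) * (fibpoly algC n.-1).[x].
Proof.
case: n => [|[|[|m]]] // _.
have [Tm1 Tm2] := det_tridA_leading_lucaspoly x (ltnSn m.+2).
have corner : tridA_super m.+3 m.+1 = 2 * 'i.
  by rewrite /tridA_super ifT //; apply/orP; right; apply/eqP; lia.
rewrite tridA_tridiag det_tridiagSS Tm1 Tm2 corner horner_mul_X2_add4_fibpoly.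
by have sqi := @sqrCi algC; ring: sqi.
Qed.
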